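(* Let $(V,h)$ and $(V',h')$ be finite-dimensional $\epsilon$-hermitian spaces with respect to $(F,\rho)$, let $n$ be a positive integer, let $\Lambda$ be a self-dual lattice sequence in $(V,h)$, and let $f:V\to V'$ be an $F$-linear isomorphism such that the lattice sequence $f(\Lambda):s\mapsto f(\Lambda_s)$ is self-dual in $(V',h')$ and $$\sigma_{h,h'}(f)\in\tilde{\mathrm U}^n(\Lambda)\,f^{-1}\,\tilde{\mathrm U}^n(f(\Lambda)).$$ Then there is an isometry $\phi:(V,h)\to(V',h')$ of $\epsilon$-hermitian spaces contained in $\tilde{\mathrm U}^n(f(\Lambda))\,f\,\tilde{\mathrm U}^n(\Lambda)$.
   Context: $F$ is a nonarchimedean local field of odd residual characteristic (valuation ring $o_F$, maximal ideal $\mathfrak p_F$), $\rho$ an automorphism of $F$ with $\rho^2=\mathrm{id}$, $\epsilon\in\{\pm1\}$. An $\epsilon$-hermitian space w.r.t. $(F,\rho)$ is a finite-dimensional right $F$-vector space with nondegenerate biadditive $h$ satisfying $h(v_1x,v_2y)=\rho(x)\epsilon\rho(h(v_2,v_1))y$. An $o_F$-lattice sequence $\Lambda$ in $V$ is a map from $\mathbb Z$ to full-rank $o_F$-lattices in $V$, decreasing ($\Lambda_s\subseteq\Lambda_t$ for $s>t$), with $\Lambda_s\pi=\Lambda_{s+e}$ for some fixed $e\ge1$ and a uniformizer $\pi$; $M^{\#}=\{v:h(v,M)\subseteq\mathfrak p_F\}$, and $\Lambda$ is self-dual if $(\Lambda_s)^{\#}=\Lambda_{u-s}$ for some $u$ and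 all $s$. For a lattice sequence $\Lambda$ in $V$, $\mathfrak a_n(\Lambda)=\{a\in\mathrm{End}_F(V): a\Lambda_s\subseteq\Lambda_{s+n}\ \forall s\}$ and $\tilde{\mathrm U}^n(\Lambda)=1+\mathfrak a_n(\Lambda)$ for $n\ge1$. For $f\in\mathrm{Hom}_F(V,V')$, $\sigma_{h,h'}(f)\in\mathrm{Hom}_F(V',V)$ is defined by $h'(f(v),w)=h(v,\sigma_{h,h'}(f)(w))$ for all $v\in V$, $w\in V'$. *)

From HB Require Import structures.
From mathcomp Require Import all_boot all_order all_algebra.
Set Implicit Arguments. Unset Strict Implicit. Unset Printing Implicit Defensive.
Import Order.TTheory GRing.Theory Num.Theory.
Local Open Scope ring_scope.

(* v x is only meaningful for x != 0 (v 0 = +infinity by convention below). *)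

Definition in_oF (F : fieldType) (v : F -> int) (x : F) : bool :=
  (x == 0) || (0 <= v x).
Definition in_pF (F : fieldType) (v : F -> int) (x : F) : bool :=
  (x == 0) || (0 < v x).
Definition in_pF_pow (F : fieldType) (v : F -> int) (N : nat) (x : F) : bool :=
  (x == 0) || (N%:Z <= v x).

Definition is_discrete_valuation (F : fieldType) (v : F -> int) : Prop :=
  [/\ (forall x y, x != 0 -> y != 0 -> v (x * y) = v x + v y),
      (forall x y, x != 0 -> y != 0 -> x + y != 0 ->
          Num.min (v x) (v y) <= v (x + y))
    & (exists pi : F, pi != 0 /\ v pi = 1)].

Definition valuation_complete (F : fieldType) (v : F -> int) : Prop :=
  forall a : nat -> F,
    (forall N : nat, exists M : nat, forall m k, (M <= m)%N -> (M <= k)%N ->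
        in_pF_pow v N (a m - a k)) ->
    exists l : F, forall N : nat, exists M : nat, forall m, (M <= m)%N ->
        in_pF_pow v N (a m - l).

Definition finite_residue_field (F : fieldType) (v : F -> int) : Prop :=
  exists s : seq F,
    [/\ (forall y, y \in s -> in_oF v y),
        (forall y z, y \in s -> z \in s -> in_pF v (y - z) -> y = z)
      & (forall x, in_oF v x -> exists2 y, y \in s & in_pF v (x - y))].

Definition odd_residual_char (F : fieldType) (v : F -> int) : Prop :=
  ~~ in_pF v 2%:R.

Definition nonarch_local_field_odd (F : fieldType) (v : F -> int) : Prop :=
  [/\ is_discrete_valuation v, valuation_complete v,
      finite_residue_field v & odd_residual_char v].

(* F is commutative, so the right action v x is x *: v *)
Definition eps_hermitian (F : fieldType) (rho : F -> F) (eps : F)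
    (V : vectType F) (h : V -> V -> F) : Prop :=
  [/\ (forall v1 v2 w, h (v1 + v2) w = h v1 w + h v2 w),
      (forall w v1 v2, h w (v1 + v2) = h w v1 + h w v2),
      (forall v1 v2 (x y : F),
          h (x *: v1) (y *: v2) = rho x * (eps * rho (h v2 v1)) * y)
    & (forall w, (forall w', h w w' = 0) -> w = 0)].

Definition is_lattice (F : fieldType) (v : F -> int) (V : vectType F)
    (L : V -> Prop) : Prop :=
  exists b : seq V, basis_of fullv b /\
    forall x, L x <-> exists c : 'I_(size b) -> F,
        (forall i, in_oF v (c i)) /\ x = \sum_(i < size b) c i *: b`_i.

Definition is_lattice_seq (F : fieldType) (v : F -> int) (V : vectType F)
    (L : int -> V -> Prop) : Prop :=
  [/\ (forall s, is_lattice v (L s)),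
      (forall s t, t < s -> forall x, L s x -> L t x)
    & exists e : nat, (0 < e)%N /\ exists pi : F, [/\ pi != 0, v pi = 1 &
        forall s x, L (s + e%:Z) x <-> exists y, L s y /\ x = pi *: y]].

Definition self_dual (F : fieldType) (v : F -> int) (V : vectType F)
    (h : V -> V -> F) (L : int -> V -> Prop) : Prop :=
  exists u : int, forall s x,
    L (u - s) x <-> (forall m, L s m -> in_pF v (h x m)).

Definition self_dual_lattice_seq (F : fieldType) (v : F -> int) (V : vectType F)
    (h : V -> V -> F) (L : int -> V -> Prop) : Prop :=
  is_lattice_seq v L /\ self_dual v h L.

Definition img_seq (F : fieldType) (V V' : vectType F) (f : 'Hom(V, V'))
    (L : int -> V -> Prop) : int -> V' -> Prop :=
  fun s y => exists x, L s x /\ y = f x.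

Definition in_Utilde (F : fieldType) (V : vectType F) (L : int -> V -> Prop)
    (n : nat) (g : 'End(V)) : Prop :=
  forall s x, L s x -> L (s + n%:Z) (g x - x).

Definition is_sigma (F : fieldType) (V V' : vectType F) (h : V -> V -> F)
    (h' : V' -> V' -> F) (f : 'Hom(V, V')) (g : 'Hom(V', V)) : Prop :=
  forall x w, h' (f x) w = h x (g w).

Definition lin_iso (F : fieldType) (V V' : vectType F) (f : 'Hom(V, V')) : Prop :=
  lker f = 0%VS /\ limg f = fullv.

Definition is_isometry (F : fieldType) (V V' : vectType F) (h : V -> V -> F)
    (h' : V' -> V' -> F) (phi : 'Hom(V, V')) : Prop :=
  lin_iso phi /\ forall x y, h' (phi x) (phi y) = h x y.

From HB Require Import structures.
From mathcomp Require Import all_boot all_order all_algebra.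
From mathcomp Require Import zify.
From Stdlib Require IndefiniteDescription.
Import Order.TTheory GRing.Theory Num.Theory.
Local Open Scope ring_scope.
Set Implicit Arguments. Unset Strict Implicit. Unset Printing Implicit Defensive.

(* Put a := σ(f) f. It is h-self-adjoint and x := a - 1 lies in a_n(Λ). If c is a
   self-adjoint element of Ũ^n(Λ) with c a c = 1, then φ := f c is an isometry:
   h'(f c p, f c q) = h(c p, a c q) = h(p, c a c q) = h(p, q).  Writing c = 1 + y,
   the equation c a c = 1 reads y = -(y^2 + (1 + y) x (1 + y))/2; as 2 is a unit
   of o_F, the right-hand side maps a_n(Λ) to itself and raises the level of
   differences by n.  Its iterates from 0 are self-adjoint and converge by
   completeness, and self-duality of Λ makes h continuous, so the limit is still
   self-adjoint. *)

Section Valuation.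
Variables (F : fieldType) (v : F -> int).
Hypothesis hv : is_discrete_valuation v.

Lemma valM x y : x != 0 -> y != 0 -> v (x * y) = v x + v y.
Proof. by have [hM _ _] := hv; apply: hM. Qed.

Lemma valD x y : x != 0 -> y != 0 -> x + y != 0 ->
  Num.min (v x) (v y) <= v (x + y).
Proof. by have [_ hD _] := hv; apply: hD. Qed.

Lemma val1 : v 1 = 0.
Proof.
have : v (1 : F) = v 1 + v 1 by rewrite -{1}(mulr1 (1 : F)) valM ?oner_neq0.
lia.
Qed.

Lemma valN x : x != 0 -> v (- x) = v x.
Proof.
have n1 : (-1 : F) != 0 by rewrite oppr_eq0 oner_neq0.
have : v (-1 : F) + v (-1) = 0 by rewrite -valM // mulrNN mulr1 val1.
move=> vN1 x0; rewrite -mulN1r valM //; lia.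
Qed.

Lemma valV x : x != 0 -> v x^-1 = - v x.
Proof.
move=> x0; have : v x + v x^-1 = 0 by rewrite -valM ?invr_neq0 // mulfV // val1.
lia.
Qed.

Lemma valX x k : x != 0 -> v (x ^+ k) = k%:Z * v x.
Proof.
move=> x0; elim: k => [|k IH]; first by rewrite expr0 val1 mul0r.
rewrite exprS valM ?expf_neq0 // IH; lia.
Qed.

Lemma in_pF_powD N x y :
  in_pF_pow v N x -> in_pF_pow v N y -> in_pF_pow v N (x + y).
Proof.
rewrite /in_pF_pow; have [->|x0] := eqVneq x 0; first by rewrite add0r.
have [->|y0] := eqVneq y 0; first by rewrite addr0 (negbTE x0).
have [//|s0 /= hx hy] := eqVneq (x + y) 0.
have := valD x0 y0 s0; rewrite /Num.min.
by case: ifP => _ h; [exact: le_trans hx h|exact: le_trans hy h].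
Qed.

Lemma in_pF_powN N x : in_pF_pow v N x -> in_pF_pow v N (- x).
Proof.
rewrite /in_pF_pow; have [->|x0] := eqVneq x 0; first by rewrite oppr0 eqxx.
by rewrite oppr_eq0 (negbTE x0) valN.
Qed.

Lemma in_pF_powB N x y :
  in_pF_pow v N x -> in_pF_pow v N y -> in_pF_pow v N (x - y).
Proof. by move=> hx hy; apply/in_pF_powD/in_pF_powN. Qed.

Lemma in_pF_pow_le N M x : (M <= N)%N -> in_pF_pow v N x -> in_pF_pow v M x.
Proof. by rewrite /in_pF_pow => hMN /orP[->//|hN]; apply/orP; right; lia. Qed.

Lemma in_pF_pow_eq0 x : (forall N, in_pF_pow v N x) -> x = 0.
Proof.
move=> hx; apply/eqP; have /orP[//|] := hx (`|v x| + 1)%N; lia.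
Qed.

Lemma in_pF_pow1 x : in_pF v x = in_pF_pow v 1 x.
Proof. by rewrite /in_pF /in_pF_pow; case: (x == 0) => //=; apply/idP/idP; lia. Qed.

Lemma in_oFD x y : in_oF v x -> in_oF v y -> in_oF v (x + y).
Proof. exact: (@in_pF_powD 0). Qed.

Lemma in_oFN x : in_oF v x -> in_oF v (- x).
Proof. exact: (@in_pF_powN 0). Qed.

Lemma in_oFM x y : in_oF v x -> in_oF v y -> in_oF v (x * y).
Proof.
rewrite /in_oF; have [->|x0] := eqVneq x 0; first by rewrite mul0r eqxx.
have [->|y0] := eqVneq y 0; first by rewrite mulr0 eqxx.
by rewrite mulf_eq0 (negbTE x0) (negbTE y0) /= valM // => hx hy; lia.
Qed.

Lemma in_oF1 : in_oF v 1.
Proof. by rewrite /in_oF val1 lexx orbT. Qed.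

Lemma in_oF_inv2 : odd_residual_char v -> in_oF v 2%:R^-1.
Proof.
rewrite /odd_residual_char /in_pF negb_or => /andP[n2 hp].
have : in_oF v 2%:R by rewrite -addn1 natrD in_oFD ?in_oF1.
rewrite /in_oF (negbTE n2) invr_eq0 (negbTE n2) /= valV // oppr_ge0 => _.
by rewrite leNgt.
Qed.

Section Uniformizer.
Variable pi : F.
Hypotheses (pi0 : pi != 0) (val_pi : v pi = 1).

Lemma in_pF_powE N x : in_pF_pow v N x = in_oF v (pi ^- N * x).
Proof.
rewrite /in_pF_pow /in_oF mulf_eq0 invr_eq0 expf_eq0 (negbTE pi0) andbF /=.
have [//|x0] := eqVneq x 0.
rewrite /= valM ?invr_neq0 ?expf_neq0 // valV ?expf_neq0 // valX // val_pi.
by apply/idP/idP; lia.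
Qed.

Lemma in_pF_pow_mulX N M x :
  in_pF_pow v M x -> in_pF_pow v (N + M) (pi ^+ N * x).
Proof.
rewrite /in_pF_pow mulf_eq0 expf_eq0 (negbTE pi0) andbF /=.
by have [//|x0] := eqVneq x 0; rewrite /= valM ?expf_neq0 // valX // val_pi; lia.
Qed.

Lemma in_oF_mulX x K : (`|v x| <= K)%N -> in_oF v (pi ^+ K * x).
Proof.
move=> hK; rewrite /in_oF mulf_eq0 expf_eq0 (negbTE pi0) andbF /=.
by have [//|x0] := eqVneq x 0; rewrite /= valM ?expf_neq0 // valX // val_pi; lia.
Qed.

End Uniformizer.
End Valuation.

Section Hermitian.
Variables (F : fieldType) (rho : {rmorphism F -> F}) (eps : F) (W : vectType F).
Variable h : W -> W -> F.
Hypothesis hh : eps_hermitian rho eps h.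

Lemma hermC p q : h p q = eps * rho (h q p).
Proof.
have [_ _ hZ _] := hh; have := hZ p q 1 1.
by rewrite !scale1r rmorph1 mul1r mulr1.
Qed.

Lemma hermZr p q c : h p (c *: q) = h p q * c.
Proof.
have [_ _ hZ _] := hh; have := hZ p q 1 c.
by rewrite scale1r rmorph1 mul1r -hermC.
Qed.

Lemma hermZl p q c : h (c *: p) q = rho c * h p q.
Proof.
have [_ _ hZ _] := hh; have := hZ p q c 1.
by rewrite scale1r mulr1 -hermC.
Qed.

Lemma hermBl p p' q : h (p - p') q = h p q - h p' q.
Proof.
have [hD _ _ _] := hh.
by rewrite hD -scaleN1r hermZl rmorphN1 mulN1r.
Qed.

Lemma hermBr p q q' : h p (q - q') = h p q - h p q'.
Proof.
have [_ hD _ _] := hh.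
by rewrite hD -scaleN1r hermZr mulrN1.
Qed.

Definition self_adjoint (y : 'End(W)) := forall p q, h (y p) q = h p (y q).

Lemma self_adjoint0 : self_adjoint 0.
Proof. by move=> p q; rewrite !zero_lfunE -(scale0r 0) hermZl hermZr rmorph0 mul0r mulr0. Qed.

Lemma self_adjoint1 : self_adjoint \1.
Proof. by move=> p q; rewrite !id_lfunE. Qed.

Lemma self_adjointD y y' : self_adjoint y -> self_adjoint y' -> self_adjoint (y + y').
Proof. by have [hD hD' _ _] := hh; move=> sy sy' p q; rewrite !add_lfunE hD hD' sy sy'. Qed.

Lemma self_adjointB y y' : self_adjoint y -> self_adjoint y' -> self_adjoint (y - y').
Proof. by move=> sy sy' p q; rewrite !add_lfunE !opp_lfunE hermBl hermBr sy sy'. Qed.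

Lemma self_adjointZ c y : rho c = c -> self_adjoint y -> self_adjoint (c *: y).
Proof. by move=> hc sy p q; rewrite !scale_lfunE hermZl hermZr sy hc mulrC. Qed.

Lemma self_adjoint_conj y w :
  self_adjoint y -> self_adjoint w -> self_adjoint (y \o w \o y)%VF.
Proof. by move=> sy sw p q; rewrite !comp_lfunE sy sw sy. Qed.

Lemma self_adjoint_sqr y : self_adjoint y -> self_adjoint (y \o y)%VF.
Proof. by move=> sy p q; rewrite !comp_lfunE sy sy. Qed.

End Hermitian.

Lemma lfun_sqrB (F : fieldType) (W : vectType F) (p q : 'End(W)) :
  ((p \o p) - (q \o q) = (p \o (p - q)) + ((p - q) \o q))%VF.
Proof.
apply/lfunP=> z; rewrite !(add_lfunE, opp_lfunE, comp_lfunE) linearB /=.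
by rewrite addrA subrK.
Qed.

Lemma lfun_conjB (F : fieldType) (W : vectType F) (p q x : 'End(W)) :
  ((p \o x \o p) - (q \o x \o q) = ((p - q) \o x \o p) + (q \o x \o (p - q)))%VF.
Proof.
apply/lfunP=> z; rewrite !(add_lfunE, opp_lfunE, comp_lfunE) !linearB /=.
by rewrite addrA subrK.
Qed.

Section LatticeSeq.
Variables (F : fieldType) (v : F -> int) (V : vectType F) (L : int -> V -> Prop).
Variables (e : nat) (pi : F).
Hypotheses (hv : is_discrete_valuation v) (pi0 : pi != 0) (val_pi : v pi = 1).
Hypothesis e_gt0 : (0 < e)%N.
Hypothesis hlat : forall s, is_lattice v (L s).
Hypothesis hdecr : forall s t, t < s -> forall x, L s x -> L t x.
Hypothesis hperiod : forall s x, L (s + e%:Z) x <-> exists y, L s y /\ x = pi *: y.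

Lemma lseq0 s : L s 0.
Proof.
have [b [_ hb]] := hlat s; apply/hb; exists (fun _ => 0); split=> [i|].
  by rewrite /in_oF eqxx.
by rewrite big1 // => i _; rewrite scale0r.
Qed.

Lemma lseqD s x y : L s x -> L s y -> L s (x + y).
Proof.
have [b [_ hb]] := hlat s => /hb[c [hc ->]] /hb[d [hd ->]].
apply/hb; exists (fun i => c i + d i); split=> [i|]; first exact: in_oFD.
by rewrite -big_split; apply: eq_bigr => i _; rewrite scalerDl.
Qed.

Lemma lseqZ s c x : in_oF v c -> L s x -> L s (c *: x).
Proof.
have [b [_ hb]] := hlat s => hc /hb[d [hd ->]].
apply/hb; exists (fun i => c * d i); split=> [i|]; first exact: in_oFM.
by rewrite scaler_sumr; apply: eq_bigr => i _; rewrite scalerA.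
Qed.

Lemma lseqB s x y : L s x -> L s y -> L s (x - y).
Proof.
move=> hx hy; rewrite -scaleN1r; apply/lseqD/lseqZ => //.
exact/(in_oFN hv)/(in_oF1 hv).
Qed.

Lemma lseq_le s t x : t <= s -> L s x -> L t x.
Proof. by rewrite le_eqVlt => /orP[/eqP->//|hts]; exact: hdecr. Qed.

Lemma lseq_scaleX k s x : L (s + k%:Z * e%:Z) (pi ^+ k *: x) <-> L s x.
Proof.
elim: k => [|k IH]; first by rewrite mul0r addr0 expr0 scale1r.
have -> : s + k.+1%:Z * e%:Z = (s + k%:Z * e%:Z) + e%:Z by lia.
rewrite exprS -scalerA hperiod -IH.
by split=> [[y [hy /(scalerI pi0) ->]] //|hx]; exists (pi ^+ k *: x).
Qed.

Lemma lseq_scale c : exists J : int, forall s x, L s x -> L (s - J) (c *: x).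
Proof.
exists (`|v c|%N%:Z * e%:Z) => s x hx; apply/(lseq_scaleX `|v c|).
by rewrite subrK scalerA; apply: lseqZ => //; apply: in_oF_mulX.
Qed.

Definition lseq_cauchy (z : nat -> V) := forall s, exists K, forall m k,
  (K <= m)%N -> (K <= k)%N -> L s (z m - z k).

Definition lseq_cvg (z : nat -> V) (l : V) := forall s, exists K, forall k,
  (K <= k)%N -> L s (l - z k).

Section Coordinates.
Variable b : seq V.
Hypothesis hb : basis_of fullv b.
Hypothesis hL0 : forall x, L 0 x <-> exists c : 'I_(size b) -> F,
  (forall i, in_oF v (c i)) /\ x = \sum_(i < size b) c i *: b`_i.

Let coordK x : x = \sum_i coord (in_tuple b) i x *: b`_i.
Proof. by apply: coord_span; rewrite (span_basis hb) memvf. Qed.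

Let coord_comb (c : 'I_(size b) -> F) j :
  coord (in_tuple b) j (\sum_i c i *: b`_i) = c j.
Proof. by rewrite coord_sum_free //; exact: (basis_free hb). Qed.

Let lseq0_coord x : L 0 x <-> forall i, in_oF v (coord (in_tuple b) i x).
Proof.
split=> [/hL0[c [hc ->]] i|hx]; first by rewrite coord_comb.
by apply/hL0; exists (fun i => coord (in_tuple b) i x); split=> //; apply: coordK.
Qed.

Lemma lseq_coord N x :
  L (N%:Z * e%:Z) x <-> forall i, in_pF_pow v N (coord (in_tuple b) i x).
Proof.
have := lseq_scaleX N 0 (pi ^- N *: x).
rewrite add0r scalerA mulfV ?expf_neq0 // scale1r => ->.
rewrite lseq0_coord; split=> hx i; move: (hx i); rewrite linearZ /=.
  by rewrite (in_pF_powE hv pi0 val_pi).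
by rewrite (in_pF_powE hv pi0 val_pi).
Qed.

Lemma lseq_exhaustive_coord x : exists s, L s x.
Proof.
pose K := (\max_i `|v (coord (in_tuple b) i x)|)%N.
exists (- (K%:Z * e%:Z)); apply/(lseq_scaleX K); rewrite addNr.
apply/lseq0_coord => i; rewrite linearZ /=.
exact/in_oF_mulX/leq_bigmax.
Qed.

Lemma lseq_separated_coord x : (forall s, L s x) -> x = 0.
Proof.
move=> hx; rewrite (coordK x) big1 // => i _.
suff -> : coord (in_tuple b) i x = 0 by rewrite scale0r.
by apply: in_pF_pow_eq0 => N; apply: (proj1 (lseq_coord N x) (hx _) i).
Qed.

Lemma lseq_complete_coord z : valuation_complete v -> lseq_cauchy z ->
  exists l, lseq_cvg z l.
Proof.
move=> hcomp hz.
have hcoord i : exists l : F, forall N, exists M, forall m, (M <= m)%N ->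
    in_pF_pow v N (coord (in_tuple b) i (z m) - l).
  apply: hcomp => N; have [K hK] := hz (N%:Z * e%:Z).
  exists K => m k hm hk; have := proj1 (lseq_coord N _) (hK m k hm hk) i.
  by rewrite linearB.
have [l hl] := fin_all_exists hcoord.
exists (\sum_i l i *: b`_i) => s.
have [M hM] := fin_all_exists (fun i => hl i `|s|%N).
exists (\max_i M i) => k hk.
apply: (@lseq_le (`|s|%N%:Z * e%:Z)).
  have : s <= `|s|%N%:Z by rewrite abszE ler_norm.
  by move: (`|s|%N) e_gt0 => a; nia.
apply/lseq_coord => i; rewrite linearB /= coord_comb.
have := hM i k (leq_trans (leq_bigmax i) hk).
by move/(in_pF_powN hv); rewrite opprB.
Qed.

End Coordinates.

Lemma lseq_exhaustive x : exists s, L s x.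
Proof. by have [b [hb hL0]] := hlat 0; exact: lseq_exhaustive_coord hb hL0 x. Qed.

Lemma lseq_separated x : (forall s, L s x) -> x = 0.
Proof. by have [b [hb hL0]] := hlat 0; exact: lseq_separated_coord hb hL0 x. Qed.

Lemma lseq_complete z : valuation_complete v -> lseq_cauchy z ->
  exists l, lseq_cvg z l.
Proof. by have [b [hb hL0]] := hlat 0; exact: lseq_complete_coord hb hL0 z. Qed.

Lemma lseq_cvg_uniq z l l' : lseq_cvg z l -> lseq_cvg z l' -> l = l'.
Proof.
move=> hl hl'; apply/eqP; rewrite -subr_eq0; apply/eqP; apply: lseq_separated => s.
have [K hK] := hl s; have [K' hK'] := hl' s.
have -> : l - l' = (l - z (maxn K K')) - (l' - z (maxn K K')).
  by rewrite opprB addrA subrK.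
by apply: lseqB; [apply: hK; rewrite leq_maxl|apply: hK'; rewrite leq_maxr].
Qed.

Lemma lseq_cvgD z z' l l' : lseq_cvg z l -> lseq_cvg z' l' ->
  lseq_cvg (fun k => z k + z' k) (l + l').
Proof.
move=> hl hl' s; have [K hK] := hl s; have [K' hK'] := hl' s.
exists (maxn K K') => k; rewrite geq_max => /andP[hk hk'].
by rewrite opprD addrACA; apply: lseqD; [apply: hK|apply: hK'].
Qed.

Lemma lseq_cvgZ z l c : lseq_cvg z l -> lseq_cvg (fun k => c *: z k) (c *: l).
Proof.
move=> hl s; have [J hJ] := lseq_scale c; have [K hK] := hl (s + J).
by exists K => k hk; have := hJ _ _ (hK k hk); rewrite addrK scalerBr.
Qed.

Lemma eq_lseq_cvg z z' l : (forall k, z k = z' k) -> lseq_cvg z l -> lseq_cvg z' l.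
Proof. by move=> ez hl s; have [K hK] := hl s; exists K => k; rewrite -ez; apply: hK. Qed.

Lemma lseq_cvg_cst c : lseq_cvg (fun _ => c) c.
Proof. by move=> s; exists 0%N => k _; rewrite subrr; apply: lseq0. Qed.

Lemma lseq_cvgS z l : lseq_cvg z l -> lseq_cvg (fun k => z k.+1) l.
Proof. by move=> hl s; have [K hK] := hl s; exists K => k /leqW; apply: hK. Qed.

Definition in_a (m : int) (y : 'End(V)) := forall s x, L s x -> L (s + m) (y x).

Lemma in_UtildeE n u : in_Utilde L n u <-> in_a n (u - \1)%VF.
Proof.
by split=> hu s x /hu; rewrite add_lfunE opp_lfunE id_lfunE.
Qed.

Lemma in_a0 m : in_a m 0.
Proof. by move=> s x _; rewrite zero_lfunE; apply: lseq0. Qed.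

Lemma in_a1 : in_a 0 \1.
Proof. by move=> s x; rewrite addr0 id_lfunE. Qed.

Lemma in_aD m y y' : in_a m y -> in_a m y' -> in_a m (y + y').
Proof. by move=> hy hy' s x hx; rewrite add_lfunE; apply: lseqD; [apply: hy|apply: hy']. Qed.

Lemma in_aZ m c y : in_oF v c -> in_a m y -> in_a m (c *: y).
Proof. by move=> hc hy s x hx; rewrite scale_lfunE; apply: lseqZ => //; apply: hy. Qed.

Lemma in_a_comp m m' y y' : in_a m y -> in_a m' y' -> in_a (m + m') (y \o y')%VF.
Proof.
move=> hy hy' s x hx; rewrite comp_lfunE.
have -> : s + (m + m') = (s + m') + m by rewrite addrA addrAC.
by apply/hy/hy'.
Qed.

Lemma in_a_le m m' y : m' <= m -> in_a m y -> in_a m' y.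
Proof. by move=> hm hy s x hx; apply: (@lseq_le (s + m)); [rewrite lerD2l|apply: hy]. Qed.

Lemma in_a_comp_sigma (V' : vectType F) (f : 'Hom(V, V')) n u1 u2 :
  lker f = 0%VS -> in_Utilde L n u1 -> in_Utilde (img_seq f L) n u2 ->
  in_a n ((u1 \o f^-1 \o u2) \o f - \1)%VF.
Proof.
move=> fker hu1 hu2 s z hz.
rewrite add_lfunE opp_lfunE id_lfunE !comp_lfunE.
have [w [hw fw]] : img_seq f L (s + n%:Z) (u2 (f z) - f z) by apply: hu2; exists z.
have -> : u2 (f z) = f z + f w by rewrite -fw addrC subrK.
rewrite -linearD lker0_lfunK ?fker //.
have hzw : L s (z + w) by apply/lseqD/(@lseq_le (s + n%:Z)) => //; rewrite lerDl.
have -> : u1 (z + w) - z = (u1 (z + w) - (z + w)) + w by rewrite opprD addrA subrK.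
by apply: lseqD => //; apply: hu1.
Qed.

Lemma lseq_cvg_lfun p m z l : in_a m p -> lseq_cvg z l ->
  lseq_cvg (fun k => p (z k)) (p l).
Proof.
move=> hp hl s; have [K hK] := hl (s - m); exists K => k hk.
by rewrite -linearB; have := hp _ _ (hK k hk); rewrite subrK.
Qed.

Lemma lseq_cvg_app (y : nat -> 'End(V)) Y m z l : (forall k, in_a m (y k)) ->
  (forall x, lseq_cvg (fun k => y k x) (Y x)) -> lseq_cvg z l ->
  lseq_cvg (fun k => y k (z k)) (Y l).
Proof.
move=> hy hY hl s; have [K hK] := hY l s; have [K' hK'] := hl (s - m).
exists (maxn K K') => k; rewrite geq_max => /andP[hk hk'].
rewrite -(subrK (y k l) (Y l)) -addrA -linearB; apply: lseqD; first exact: hK.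
by have := hy k _ _ (hK' k hk'); rewrite subrK.
Qed.

Lemma lseq_cauchy_lfun (y : nat -> 'End(V)) n : (0 < n)%N ->
  (forall k, in_a (k.+1%:Z * n%:Z) (y k.+1 - y k)%VF) ->
  forall x, lseq_cauchy (fun k => y k x).
Proof.
move=> n_gt0 hy x; have [t ht] := lseq_exhaustive x.
have tail K j : L (t + K%:Z * n%:Z) (y (K + j)%N x - y K x).
  elim: j => [|j IH]; first by rewrite addn0 subrr; apply: lseq0.
  have -> : y (K + j.+1)%N x - y K x =
      (y (K + j).+1 - y (K + j)%N)%VF x + (y (K + j)%N x - y K x).
    by rewrite add_lfunE opp_lfunE addnS addrA subrK.
  apply: lseqD => //; apply: (@lseq_le (t + (K + j).+1%:Z * n%:Z)); last exact: hy.
  by rewrite lerD2l; nia.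
move=> s; have [K hK] : exists K : nat, s - t <= K%:Z.
  by exists `|s - t|%N; rewrite abszE ler_norm.
exists K => m k hm hk.
have -> : y m x - y k x =
    (y (K + (m - K))%N x - y K x) - (y (K + (k - K))%N x - y K x).
  by rewrite !subnKC // opprB addrA subrK.
by apply: (@lseq_le (t + K%:Z * n%:Z)); [nia|apply: lseqB].
Qed.

Lemma lseq_lim_lfun (y : nat -> 'End(V)) : valuation_complete v ->
  (forall x, lseq_cauchy (fun k => y k x)) ->
  exists Y : 'End(V), forall x, lseq_cvg (fun k => y k x) (Y x).
Proof.
move=> hcomp hy.
have hlim x : exists l, lseq_cvg (fun k => y k x) l by apply: lseq_complete.
have [Yf hYf] := @IndefiniteDescription.functional_choice _ _ _ hlim.
have linY : linear Yf.
  move=> c x w; apply: (@lseq_cvg_uniq (fun k => y k (c *: x + w))) => //.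
  apply: (@eq_lseq_cvg (fun k => c *: y k x + y k w)) => [k|]; first by rewrite linearP.
  by apply: lseq_cvgD => //; apply: lseq_cvgZ.
pose Ylin : {linear V -> V} := HB.pack Yf (GRing.isLinear.Build _ _ _ _ Yf linY).
by exists (linfun Ylin) => x; rewrite lfunE.
Qed.


Section SelfDual.
Variables (rho : {rmorphism F -> F}) (eps : F) (h : V -> V -> F) (u : int).
Hypothesis hh : eps_hermitian rho eps h.
Hypothesis hu : forall s x, L (u - s) x <-> (forall m, L s m -> in_pF v (h x m)).

Lemma herm_lseq_pF_pow N s t p q : u + N%:Z * e%:Z <= s + t -> L s p -> L t q ->
  in_pF_pow v N (h p q).
Proof.
move=> hst hp hq.
have hq' : L (t - N%:Z * e%:Z) (pi ^- N *: q).
  by apply/(lseq_scaleX N); rewrite subrK scalerA mulfV ?expf_neq0 // scale1r.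
have hp' : L (u - (t - N%:Z * e%:Z)) p by apply: (@lseq_le s) => //; lia.
have := proj1 (hu _ _) hp' _ hq'.
have -> : h p q = h p (pi ^- N *: q) * pi ^+ N.
  by rewrite -(hermZr hh) scalerA mulfV ?expf_neq0 // scale1r.
rewrite in_pF_pow1 mulrC => /(in_pF_pow_mulX hv pi0 val_pi N).
by apply: in_pF_pow_le; lia.
Qed.

(* Self-duality makes h continuous for the Λ-adic topology. *)
Lemma self_adjoint_lim (y : nat -> 'End(V)) (Y : 'End(V)) :
  (forall k, self_adjoint h (y k)) ->
  (forall x, lseq_cvg (fun k => y k x) (Y x)) -> self_adjoint h Y.
Proof.
move=> sy hY p q; apply/eqP; rewrite -subr_eq0; apply/eqP.
apply: in_pF_pow_eq0 => N; have [s hs] := lseq_exhaustive p.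
have [t ht] := lseq_exhaustive q; pose r := u + N%:Z * e%:Z.
have [K hK] := hY p (r - t); have [K' hK'] := hY q (r - s).
have -> : h (Y p) q - h p (Y q) =
    h (Y p - y (maxn K K') p) q - h p (Y q - y (maxn K K') q).
  by rewrite (hermBl hh) (hermBr hh) sy opprB addrA subrK.
apply: (in_pF_powB hv).
  by apply: (herm_lseq_pF_pow (s := r - t) (t := t)) => //;
    [lia|apply: hK; rewrite leq_maxl].
by apply: (herm_lseq_pF_pow (s := s) (t := r - s)) => //;
  [lia|apply: hK'; rewrite leq_maxr].
Qed.

Section InverseSqrt.
Variables (n : nat) (x : 'End(V)).
Hypotheses (hcomp : valuation_complete v) (hodd : odd_residual_char v).
Hypotheses (n_gt0 : (0 < n)%N) (hx : in_a n x) (sx : self_adjoint h x).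

Let c0 : F := - 2%:R^-1.

Let in_oF_c0 : in_oF v c0.
Proof. exact/(in_oFN hv)/(in_oF_inv2 hv). Qed.

(* c = 1 + w solves c (1 + x) c = 1 iff w is a fixed point of T. *)
Let T (w : 'End(V)) : 'End(V) :=
  c0 *: ((w \o w) + ((\1 + w) \o x \o (\1 + w)))%VF.

Let y k := iter k T 0.

Let in_a1D w : in_a n w -> in_a 0 (\1 + w)%VF.
Proof. by move=> hw; apply: in_aD; [exact: in_a1|exact: in_a_le hw]. Qed.

Let in_a_T w : in_a n w -> in_a n (T w).
Proof.
move=> hw; apply: (in_aZ in_oF_c0); apply: in_aD.
  by apply: in_a_le (in_a_comp hw hw); lia.
by apply: in_a_le (in_a_comp (in_a_comp (in_a1D hw) hx) (in_a1D hw)); lia.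
Qed.

Let in_a_TB m w w' : in_a n w -> in_a n w' -> in_a m (w - w') ->
  in_a (m + n) (T w - T w').
Proof.
move=> hw hw' hd.
have -> : T w - T w' = c0 *: (((w \o (w - w')) + ((w - w') \o w')) +
    (((w - w') \o x \o (\1 + w)) + ((\1 + w') \o x \o (w - w'))))%VF.
  rewrite -scalerBr opprD addrACA lfun_sqrB lfun_conjB.
  by have -> : ((\1 + w) - (\1 + w') = w - w')%VF by rewrite opprD addrACA subrr add0r.
apply: (in_aZ in_oF_c0); apply: in_aD; apply: in_aD.
- by apply: in_a_le (in_a_comp hw hd); lia.
- by apply: in_a_le (in_a_comp hd hw'); lia.
- by apply: in_a_le (in_a_comp (in_a_comp hd hx) (in_a1D hw)); lia.
- by apply: in_a_le (in_a_comp (in_a_comp (in_a1D hw') hx) hd); lia.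
Qed.

Let in_a_y k : in_a n (y k).
Proof. by elim: k => [|k IH]; [exact: in_a0|exact: in_a_T]. Qed.

Let in_a_yB k : in_a (k.+1%:Z * n%:Z) (y k.+1 - y k).
Proof.
elim: k => [|k IH]; first by rewrite subr0 mul1r; exact: in_a_T (in_a0 _).
by apply: in_a_le (in_a_TB (in_a_y _) (in_a_y _) IH); lia.
Qed.

Let self_adjoint_y k : self_adjoint h (y k).
Proof.
have rho_c0 : rho c0 = c0 by rewrite rmorphN fmorphV rmorph_nat.
elim: k => [|k IH]; first exact: (self_adjoint0 hh).
apply: (self_adjointZ hh) => //; apply: (self_adjointD hh); first exact: self_adjoint_sqr.
by apply: self_adjoint_conj => //; apply: (self_adjointD hh) => //; exact: self_adjoint1.
Qed.

Section Limit.
Variable Y : 'End(V).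
Hypothesis hY : forall z, lseq_cvg (fun k => y k z) (Y z).

Let C := (\1 + Y)%VF.

Let CE w : C w = w + Y w.
Proof. by rewrite /C add_lfunE id_lfunE. Qed.

Let fixed_point z : Y z = c0 *: (Y (Y z) + C (x (C z))).
Proof.
pose c k := (\1 + y k)%VF.
have hc w : lseq_cvg (fun k => c k w) (C w).
  apply: (@eq_lseq_cvg (fun k => w + y k w)) => [k|].
    by rewrite /c add_lfunE id_lfunE.
  by rewrite CE; apply: lseq_cvgD => //; exact: lseq_cvg_cst.
apply: (@lseq_cvg_uniq (fun k => y k.+1 z)); first exact: lseq_cvgS (hY z).
apply: (@eq_lseq_cvg (fun k => c0 *: (y k (y k z) + c k (x (c k z))))).
  by move=> k; rewrite /= !(scale_lfunE, add_lfunE, comp_lfunE, id_lfunE).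
apply: lseq_cvgZ; apply: lseq_cvgD; first exact: (lseq_cvg_app in_a_y hY).
apply: (lseq_cvg_app (m := 0) (fun k => in_a1D (in_a_y k)) hc).
exact: lseq_cvg_lfun hx (hc z).
Qed.

Lemma conj_fixed_point : (C \o (\1 + x) \o C = \1)%VF.
Proof.
have n2 : (2%:R : F) != 0.
  by move: hodd; rewrite /odd_residual_char /in_pF negb_or => /andP[].
apply/lfunP=> z; rewrite !comp_lfunE id_lfunE add_lfunE id_lfunE linearD /=.
set t := C (x (C z)).
have hYY : Y z + Y z = - (Y (Y z) + t).
  rewrite {1 2}fixed_point -scalerDl /c0 -opprD.
  have -> : 2%:R^-1 + 2%:R^-1 = 1 :> F.
    by rewrite -mulr2n -[(_^-1) *+ 2]mulr_natr mulVf.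
  by rewrite scaleN1r.
rewrite [C (C z)]CE CE linearD /=.
have -> : z + Y z + (Y z + Y (Y z)) + t = z + ((Y z + Y z) + (Y (Y z) + t)).
  by rewrite -!addrA; congr (_ + _); rewrite !addrA.
by rewrite hYY addNr addr0.
Qed.

End Limit.

Lemma inv_sqrt_exists : exists Y : 'End(V),
  [/\ in_a n Y, self_adjoint h Y & ((\1 + Y) \o (\1 + x) \o (\1 + Y) = \1)%VF].
Proof.
have [Y hY] := lseq_lim_lfun hcomp (lseq_cauchy_lfun n_gt0 in_a_yB).
exists Y; split; last exact: conj_fixed_point.
- move=> s z hz; have [K hK] := hY z (s + n%:Z).
  by rewrite -(subrK (y K z) (Y z)); apply: lseqD; [exact: hK|exact: in_a_y].
- exact: self_adjoint_lim self_adjoint_y hY.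
Qed.

End InverseSqrt.
End SelfDual.
End LatticeSeq.

Lemma sigma_comp_self_adjoint (F : fieldType) (rho : {rmorphism F -> F}) (eps : F)
    (V V' : vectType F) (h : V -> V -> F) (h' : V' -> V' -> F)
    (f : 'Hom(V, V')) (g : 'Hom(V', V)) :
  eps_hermitian rho eps h -> eps_hermitian rho eps h' -> is_sigma h h' f g ->
  self_adjoint h (g \o f)%VF.
Proof.
move=> hh hh' hg p q; rewrite !comp_lfunE (hermC hh (g (f p)) q) -hg.
by rewrite -(hermC hh') hg.
Qed.

Lemma isometry_comp_sigma (F : fieldType) (V V' : vectType F) (h : V -> V -> F)
    (h' : V' -> V' -> F) (f : 'Hom(V, V')) (g : 'Hom(V', V)) (c : 'End(V)) :
  lin_iso f -> is_sigma h h' f g -> self_adjoint h c ->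
  (c \o (g \o f) \o c = \1)%VF -> is_isometry h h' (f \o c)%VF.
Proof.
move=> [fker fimg] hg sc hcac.
have cK z : c (g (f (c z))) = z by rewrite -[RHS]id_lfunE -hcac !comp_lfunE.
have finj : injective f by apply/lker0P; rewrite fker.
have cinj : injective c by move=> p q hpq; rewrite -(cK p) -(cK q) hpq.
have cker : lker c == 0%VS by apply/lker0P.
split; last by move=> p q; rewrite !comp_lfunE hg sc cK.
split; first by apply/eqP/lker0P => p q; rewrite !comp_lfunE => /finj /cinj.
by rewrite limg_comp (lker0_limgf cker).
Qed.

Theorem corollary3p2 (F : fieldType) (v : F -> int) (rho : {rmorphism F -> F})
    (eps : F) (V V' : vectType F) (h : V -> V -> F) (h' : V' -> V' -> F)
    (n : nat) (L : int -> V -> Prop) (f : 'Hom(V, V')) :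
  nonarch_local_field_odd v ->
  (forall x, rho (rho x) = x) ->
  (eps = 1 \/ eps = -1) ->
  eps_hermitian rho eps h ->
  eps_hermitian rho eps h' ->
  (0 < n)%N ->
  self_dual_lattice_seq v h L ->
  lin_iso f ->
  self_dual v h' (img_seq f L) ->
  (exists g : 'Hom(V', V), is_sigma h h' f g /\
     exists (u1 : 'End(V)) (u2 : 'End(V')),
       [/\ in_Utilde L n u1, in_Utilde (img_seq f L) n u2
         & g = (u1 \o f^-1 \o u2)%VF]) ->
  exists phi : 'Hom(V, V'), is_isometry h h' phi /\
     exists (u2 : 'End(V')) (u1 : 'End(V)),
       [/\ in_Utilde (img_seq f L) n u2, in_Utilde L n u1
         & phi = (u2 \o f \o u1)%VF].
Proof.
move=> [hv hcomp _ hodd] _ _ hh hh' n_gt0.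
move=> [[hlat hdecr [e [e_gt0 [pi [pi0 val_pi hperiod]]]]] [u hu]] fiso _.
move=> [g [hg [u1 [u2 [hu1 hu2 gE]]]]].
have sa : self_adjoint h (g \o f - \1)%VF.
  exact/(self_adjointB hh)/self_adjoint1/(sigma_comp_self_adjoint hh hh' hg).
have ha : in_a L n (g \o f - \1)%VF.
  by rewrite gE; exact: (in_a_comp_sigma hv hlat hdecr) fiso.1 hu1 hu2.
have [Y [hY sY cE]] :=
  inv_sqrt_exists hv pi0 val_pi e_gt0 hlat hdecr hperiod hh hu hcomp hodd n_gt0 ha sa.
rewrite [(\1 + (_ - _))%VF]addrC subrK in cE.
exists (f \o (\1 + Y))%VF; split.
  apply: isometry_comp_sigma fiso hg _ cE.
  exact/(self_adjointD hh)/sY/self_adjoint1.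
exists \1%VF, (\1 + Y)%VF; split; last by rewrite comp_lfun1l.
- move=> s z _; rewrite id_lfunE subrr; exists 0.
  by rewrite linear0; split; first exact: (lseq0 hlat).
- by apply/in_UtildeE; rewrite [(\1 + Y)%VF]addrC addrK.
Qed.
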